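(* As formal power series in $t$, $$\sum_{m\ge 1}\frac{\big((m-1)!\big)^2t^{m}}{\prod_{k=1}^m (1+k^2 t)}=t \qquad\text{and}\qquad \sum_{m\ge 1}\frac{m!(m-1)!\,t^{m}}{\prod_{k=1}^m \big(1+k(k+1)t\big)}=t.$$ *)

From mathcomp Require Import all_boot all_order all_algebra.
Set Implicit Arguments. Unset Strict Implicit. Unset Printing Implicit Defensive.
Import Order.TTheory GRing.Theory Num.Theory.
Local Open Scope ring_scope.

Definition fps := nat -> rat.

Definition fps_of_poly (p : {poly rat}) : fps := fun n => p`_n.

Definition fps_mul (f g : fps) : fps :=
  fun n => \sum_(i < n.+1) f i * g (n - i)%N.

(* multiplicative inverse of a power series with invertible constant term:
   g 0 = 1/f 0,  g n = -(1/f 0) * sum_{i=1}^n f i * g (n-i).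
   inv_seq f n is the list [g 0; ...; g n]. *)
Fixpoint inv_seq (f : fps) (n : nat) : seq rat :=
  match n with
  | 0 => [:: (f 0%N)^-1]
  | n'.+1 => let s := inv_seq f n' in
      rcons s (- (f 0%N)^-1 * \sum_(j < n'.+1) f j.+1 * nth 0 s (n' - j)%N)
  end.

Definition fps_inv (f : fps) : fps := fun n => nth 0 (inv_seq f n) n.

(* the family (u_m)_{m >= 1} is summable in the t-adic topology with sum S:
   for each n, the partial sums of the n-th coefficients are eventually S n *)
Definition fps_sum_from1 (u : nat -> fps) (S : fps) : Prop :=
  forall n : nat, exists M : nat, forall N : nat, (M <= N)%N ->
    \sum_(1 <= m < N) u m n = S n.

Definition den (a : nat -> nat) (m : nat) : {poly rat} :=
  \prod_(1 <= k < m.+1) (1 + (a k)%:R *: 'X).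

Definition term (c : nat -> nat) (a : nat -> nat) (m : nat) : fps :=
  fps_mul (fps_of_poly ((c m)%:R *: 'X^m)) (fps_inv (fps_of_poly (den a m))).

From mathcomp Require Import all_boot all_order all_algebra.
From mathcomp Require Import ring.
From Stdlib Require Import FunctionalExtensionality.
Set Implicit Arguments. Unset Strict Implicit. Unset Printing Implicit Defensive.
Import Order.TTheory GRing.Theory Num.Theory.
Local Open Scope ring_scope.

(* Both identities are instances of
     sum_(m >= 1) a_1...a_(m-1) t^m / prod_(k=1..m) (1 + a_k t) = t,
   with a_k = k^2 and a_k = k(k+1).  The remainders
   R_m = a_1...a_m t^(m+1) / prod_(k=1..m) (1 + a_k t) telescope:
   R_(m-1) - R_m is the m-th term, since (1 + a_m t) - a_m t = 1.  Hence the
   first N terms sum to R_0 - R_N = t - R_N, and R_N = O(t^(N+1)). *)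

Definition fps_trunc (n : nat) (f : fps) : {poly rat} := \poly_(i < n.+1) f i.

Lemma coef_fps_trunc n f i : (i <= n)%N -> (fps_trunc n f)`_i = f i.
Proof. by move=> le_in; rewrite coef_poly ltnS le_in. Qed.

Lemma fps_mul_agree (f g : fps) (p q : {poly rat}) n :
  (forall i, (i <= n)%N -> f i = p`_i) -> (forall i, (i <= n)%N -> g i = q`_i) ->
  fps_mul f g n = (p * q)`_n.
Proof.
move=> fp gq; rewrite /fps_mul coefM; apply: eq_bigr => i _.
by rewrite fp ?gq ?leq_subr // -ltnS.
Qed.

Lemma fps_mul_trunc f g n : fps_mul f g n = (fps_trunc n f * fps_trunc n g)`_n.
Proof. by apply: fps_mul_agree => i le_in; rewrite coef_fps_trunc. Qed.

Lemma fps_mulC f g : fps_mul f g = fps_mul g f.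
Proof. by apply: functional_extensionality => n; rewrite !fps_mul_trunc mulrC. Qed.

Lemma fps_mulA f g h : fps_mul f (fps_mul g h) = fps_mul (fps_mul f g) h.
Proof.
apply: functional_extensionality => n.
have trunc_mul f1 f2 i : (i <= n)%N ->
    fps_mul f1 f2 i = (fps_trunc n f1 * fps_trunc n f2)`_i.
  move=> le_in; apply: fps_mul_agree => j le_ji;
  by rewrite coef_fps_trunc // (leq_trans le_ji le_in).
rewrite (@fps_mul_agree _ _ (fps_trunc n f) (fps_trunc n g * fps_trunc n h));
  [|by move=> i /coef_fps_trunc->|exact: trunc_mul].
rewrite (@fps_mul_agree _ _ (fps_trunc n f * fps_trunc n g) (fps_trunc n h));
  [|exact: trunc_mul|by move=> i /coef_fps_trunc->].
by rewrite mulrA.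
Qed.

Lemma fps_of_polyM p q :
  fps_of_poly (p * q) = fps_mul (fps_of_poly p) (fps_of_poly q).
Proof. by apply: functional_extensionality => n; rewrite /fps_mul /fps_of_poly coefM. Qed.

Lemma fps_mul1 f : fps_mul (fps_of_poly 1) f = f.
Proof.
apply: functional_extensionality => n.
rewrite /fps_mul big_ord_recl /fps_of_poly coef1 mul1r subn0 big1 ?addr0 //.
by move=> i _; rewrite coef1 mul0r.
Qed.

Lemma fps_mulr1 f : fps_mul f (fps_of_poly 1) = f.
Proof. by rewrite fps_mulC fps_mul1. Qed.

Lemma fps_mul0 f g : fps_mul f g 0%N = f 0%N * g 0%N.
Proof. by rewrite /fps_mul big_ord1. Qed.

Lemma fps_mulBl p q h n :
  fps_mul (fps_of_poly (p - q)) h n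
  = fps_mul (fps_of_poly p) h n - fps_mul (fps_of_poly q) h n.
Proof.
rewrite /fps_mul /fps_of_poly -sumrB; apply: eq_bigr => i _.
by rewrite coefB mulrBl.
Qed.

Lemma fps_mulXn_lt (c : rat) k f n :
  (n < k)%N -> fps_mul (fps_of_poly (c *: 'X^k)) f n = 0.
Proof.
move=> lt_nk; rewrite /fps_mul big1 // => i _.
rewrite /fps_of_poly coefZ coefXn.
have /ltn_eqF-> : (i < k)%N by apply: leq_ltn_trans lt_nk; rewrite -ltnS.
by rewrite mulr0 mul0r.
Qed.

Lemma size_inv_seq f n : size (inv_seq f n) = n.+1.
Proof. by elim: n => [|n IHn] //=; rewrite size_rcons IHn. Qed.

Lemma nth_inv_seq f k n : (k <= n)%N -> nth 0 (inv_seq f n) k = fps_inv f k.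
Proof.
elim: n => [|n IHn]; first by rewrite leqn0 => /eqP->.
rewrite leq_eqVlt => /predU1P[-> //|lt_kn].
by rewrite /= nth_rcons size_inv_seq lt_kn IHn.
Qed.

Lemma fps_invS f n :
  fps_inv f n.+1 = - (f 0%N)^-1 * \sum_(j < n.+1) f j.+1 * fps_inv f (n - j)%N.
Proof.
rewrite {1}/fps_inv /= nth_rcons size_inv_seq ltnn eqxx.
by congr (_ * _); apply: eq_bigr => j _; rewrite nth_inv_seq // leq_subr.
Qed.

Lemma fps_mulV f : f 0%N != 0 -> fps_mul f (fps_inv f) = fps_of_poly 1.
Proof.
move=> f0_neq0; apply: functional_extensionality => -[|n].
  by rewrite fps_mul0 /fps_inv /= mulfV // /fps_of_poly coef1.
rewrite /fps_mul big_ord_recl /= subn0 fps_invS /fps_of_poly coef1.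
under eq_bigr => i _ do rewrite subSS.
by rewrite mulrA mulrN mulfV // mulN1r addNr.
Qed.

Lemma fps_inv_unique f g :
  f 0%N != 0 -> fps_mul f g = fps_of_poly 1 -> fps_inv f = g.
Proof.
move=> f0_neq0 fg1.
by rewrite -[fps_inv f]fps_mul1 -fg1 (fps_mulC f) -fps_mulA fps_mulV // fps_mulr1.
Qed.

Lemma fps_inv1 : fps_inv (fps_of_poly 1) = fps_of_poly 1.
Proof. by apply: fps_inv_unique; rewrite ?fps_mul1 // /fps_of_poly coef1. Qed.

Lemma fps_inv_mulr f g :
  fps_mul f g 0%N != 0 -> fps_inv f = fps_mul g (fps_inv (fps_mul f g)).
Proof.
rewrite fps_mul0 mulf_eq0 negb_or => /andP[f0_neq0 g0_neq0].
by apply: fps_inv_unique; rewrite // fps_mulA fps_mulV // fps_mul0 mulf_neq0.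
Qed.

Section Telescoping.

Variable a : nat -> nat.

Lemma den0 : den a 0 = 1.
Proof. by rewrite /den big_geq. Qed.

Lemma denS m : den a m.+1 = den a m * (1 + (a m.+1)%:R *: 'X).
Proof. by rewrite /den big_nat_recr. Qed.

Lemma den_coef0 m : (den a m)`_0 = 1.
Proof.
rewrite /den coef0_prod big1 // => k _.
by rewrite coefD coef1 coefZ coefX mulr0 addr0.
Qed.

Lemma fps_inv_denS m :
  fps_inv (fps_of_poly (den a m)) =
  fps_mul (fps_of_poly (1 + (a m.+1)%:R *: 'X)) (fps_inv (fps_of_poly (den a m.+1))).
Proof.
rewrite denS fps_of_polyM; apply: fps_inv_mulr.
by rewrite -fps_of_polyM -denS /fps_of_poly den_coef0 oner_neq0.
Qed.

Definition partial_prod (m : nat) : nat := \prod_(1 <= k < m.+1) a k.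

Lemma partial_prod0 : partial_prod 0 = 1%N.
Proof. by rewrite /partial_prod big_geq. Qed.

Lemma partial_prodS m : partial_prod m.+1 = (partial_prod m * a m.+1)%N.
Proof. by rewrite /partial_prod big_nat_recr. Qed.

Definition remainder (m : nat) : fps :=
  fps_mul (fps_of_poly ((partial_prod m)%:R *: 'X^(m.+1)))
          (fps_inv (fps_of_poly (den a m))).

Lemma remainder0 : remainder 0 = fps_of_poly 'X.
Proof.
by rewrite /remainder partial_prod0 den0 fps_inv1 scale1r fps_mulr1.
Qed.

Lemma remainder_lt m n : (n <= m)%N -> remainder m n = 0.
Proof. by move=> le_nm; apply: fps_mulXn_lt. Qed.

Variable c : nat -> nat.
Hypothesis c_partial_prod : forall m, c m.+1 = partial_prod m.

Lemma term_telescope m n : term c a m.+1 n = remainder m n - remainder m.+1 n.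
Proof.
rewrite /remainder fps_inv_denS fps_mulA -fps_of_polyM -fps_mulBl /term.
congr (fps_mul (fps_of_poly _) _ n).
rewrite c_partial_prod partial_prodS natrM.
rewrite -!mul_polyC polyCM !exprS; ring.
Qed.

Lemma sum_term N n :
  \sum_(1 <= m < N.+1) term c a m n = fps_of_poly 'X n - remainder N n.
Proof.
elim: N => [|N IHN]; first by rewrite big_geq // remainder0 subrr.
by rewrite big_nat_recr //= IHN term_telescope addrA subrK.
Qed.

Lemma fps_sum_term : fps_sum_from1 (term c a) (fps_of_poly 'X).
Proof.
move=> n; exists n.+1 => -[|N] le_nN //.
by rewrite sum_term remainder_lt ?subr0.
Qed.

End Telescoping.

Theorem corollary5p1 :
  fps_sum_from1 (term (fun m => (m.-1)`! ^ 2)%N (fun k => k ^ 2)%N)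
                (fps_of_poly 'X)
  /\
  fps_sum_from1 (term (fun m => m`! * (m.-1)`!)%N (fun k => k * k.+1)%N)
                (fps_of_poly 'X).
Proof.
split; apply: fps_sum_term => m /=; rewrite /partial_prod.
- by rewrite -mulnn big_split /= -fact_prod.
- rewrite big_split /= -fact_prod mulnC; congr (_ * _)%N.
  by rewrite fact_prod big_nat_recl ?mul1n.
Qed.
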